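(* Let $B$ be an integral domain of characteristic zero, $n\ge3$, $x_1,\dots,x_n\in B$ and $a_1,\dots,a_n$ positive integers. Assume (i) $x_1^{a_1}+\cdots+x_n^{a_n}=0$; (ii) $\sum_{i=1}^n\frac1{a_i}\le\frac1{n-2}$; (iii) $x_1,\dots,x_n$ are pairwise relatively prime in $B$. Then $x_1,\dots,x_n\in\mathrm{ML}(R)$ in each of the following cases: (a) $R$ is a factorially closed subring of $B$ with $x_1,\dots,x_n\in R$; (b) $R=B^{[N]}$ (a polynomial ring in $N$ variables over $B$) for some $N\ge0$. Moreover, $x_1,\dots,x_n$ belong to the rigid core of $B$.
   Context: Two elements $x,y$ of a domain $B$ are relatively prime if $xB\cap yB=xyB$ and, if $0\in\{x,y\}$, then one of $x,y$ is a unit of $B$. A subring $A$ of a domain $B$ is factorially closed if for all nonzero $x,y\in B$, $xy\in A$ implies $x,y\in A$. For a domain $R$ of characteristic zero, $\mathrm{ML}(R)=\bigcap_{D}\ker D$ over all locally nilpotent derivations $D:R\to R$ (derivations such that each element is killed by some power of $D$). The rigid core of $B$ is $\bigcap_{i\ge0}\mathrm{ML}_i(B)$ where $\mathrm{ML}_0(B)=B$ and $\mathrm{ML}_{i+1}(B)=\mathrm{ML}(\mathrm{ML}_i(B))$. *)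

From HB Require Import structures.
From mathcomp Require Import all_boot all_order all_algebra.
From mathcomp Require Export mpoly.
Set Implicit Arguments. Unset Strict Implicit. Unset Printing Implicit Defensive.
Import GRing.Theory.
Local Open Scope ring_scope.

Definition is_subring (B : comNzRingType) (A : B -> Prop) : Prop :=
  [/\ A 0, A 1,
      (forall x y, A x -> A y -> A (x - y)) &
      (forall x y, A x -> A y -> A (x * y))].

Definition factorially_closed (B : comNzRingType) (A : B -> Prop) : Prop :=
  forall x y : B, x != 0 -> y != 0 -> A (x * y) -> A x /\ A y.

Definition is_LND_on (B : comNzRingType) (A : B -> Prop) (D : B -> B) : Prop :=
  [/\ (forall x, A x -> A (D x)),
      (forall x y, A x -> A y -> D (x + y) = D x + D y),
      (forall x y, A x -> A y -> D (x * y) = x * D y + y * D x) &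
      (forall x, A x -> exists m : nat, iter m D x = 0)].

Definition ML_on (B : comNzRingType) (A : B -> Prop) : B -> Prop :=
  fun x => A x /\ forall D : B -> B, is_LND_on A D -> D x = 0.

Definition ML (R : comNzRingType) : R -> Prop := ML_on (fun _ : R => True).

Fixpoint ML_iter (B : comNzRingType) (i : nat) : B -> Prop :=
  match i with
  | 0 => fun _ => True
  | i'.+1 => ML_on (@ML_iter B i')
  end.

Definition rigid_core (B : comNzRingType) : B -> Prop :=
  fun x => forall i : nat, @ML_iter B i x.

Definition rel_prime (B : comUnitRingType) (x y : B) : Prop :=
  (forall z : B, ((exists u, z = x * u) /\ (exists v, z = y * v))
                 <-> exists w, z = x * y * w)
  /\ ((x = 0 \/ y = 0) -> (x \is a GRing.unit \/ y \is a GRing.unit)).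

(* A locally nilpotent derivation D of a subring R gives every x in R a degree
   deg x, the largest p with D^p x <> 0; by the Leibniz formula for D^k (x y)
   this degree is additive in characteristic zero, so ker D is factorially
   closed.  The heart of the proof is an abc theorem for D: if
   sum_i c_i y_i^(e_i) = 0 with nonzero coefficients c_i in ker D, pairwise
   coprime y_i and at most n terms, and sum 1/e_i over the non-constant y_i is
   at most 1/(n-2), then every y_i lies in ker D.  Induct on the number of
   terms and let y_t^(e_t) have the largest degree.  If the Wronskian of the
   remaining terms vanishes, they are linearly dependent over ker D and the
   relation splits into shorter ones.  Otherwise the Wronskian is divisible by
   prod_i y_i^(e_i - (k-1)), k being the number of remaining terms, while its
   degree is at most sum e_i deg y_i - k(k-1)/2; comparing the two degrees
   with the bound on sum 1/e_i forces k = 1 and deg y_i = 0 for all i.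
   Applied to the subrings ML_i(B), which are factorially closed, and to
   B^[N], this gives the three claims. *)

From HB Require Import structures.
From mathcomp Require Import all_boot all_order all_algebra.
From mathcomp Require Import mpoly.
From mathcomp Require Import perm ring zify.
From Stdlib Require Import ClassicalEpsilon.
Set Implicit Arguments. Unset Strict Implicit. Unset Printing Implicit Defensive.
Import Order.TTheory GRing.Theory Num.Theory.
Local Open Scope ring_scope.

Section Subring.
Variables (B : comNzRingType) (R : B -> Prop).
Hypothesis hR : is_subring R.

Lemma subring0 : R 0. Proof. by case: hR. Qed.
Lemma subring1 : R 1. Proof. by case: hR. Qed.
Lemma subringB x y : R x -> R y -> R (x - y). Proof. by case: hR => _ _ + _; apply. Qed.
Lemma subringM x y : R x -> R y -> R (x * y). Proof. by case: hR => _ _ _; apply. Qed.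
Lemma subringN x : R x -> R (- x).
Proof. by rewrite -sub0r; apply: subringB subring0. Qed.
Lemma subringD x y : R x -> R y -> R (x + y).
Proof. by move=> Rx Ry; rewrite -[y]opprK; apply/subringB/subringN. Qed.

Lemma subring_sum (I : Type) (r : seq I) (P : pred I) (F : I -> B) :
  (forall i, P i -> R (F i)) -> R (\sum_(i <- r | P i) F i).
Proof. by move=> RF; apply: big_ind => //; [apply: subring0 | apply: subringD]. Qed.

Lemma subring_prod (I : Type) (r : seq I) (P : pred I) (F : I -> B) :
  (forall i, P i -> R (F i)) -> R (\prod_(i <- r | P i) F i).
Proof. by move=> RF; apply: big_ind => //; [apply: subring1 | apply: subringM]. Qed.

Lemma subringX x k : R x -> R (x ^+ k).
Proof. by move=> Rx; elim: k => [|k]; [apply: subring1 | rewrite exprS; apply: subringM]. Qed.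

Lemma subringMn x k : R x -> R (x *+ k).
Proof. by move=> Rx; elim: k => [|k]; [apply: subring0 | rewrite mulrS; apply: subringD]. Qed.

Lemma subring_sign k : R ((-1) ^+ k).
Proof. exact/subringX/subringN/subring1. Qed.

Lemma subring_det k (A : 'M[B]_k) : (forall i j, R (A i j)) -> R (\det A).
Proof.
move=> RA; apply: subring_sum => s _; apply: subringM; first exact: subring_sign.
by apply: subring_prod => i _; apply: RA.
Qed.

Lemma subring_cofactor k (A : 'M[B]_k) i j : (forall i j, R (A i j)) -> R (cofactor A i j).
Proof.
move=> RA; apply: subringM; first exact: subring_sign.
by apply: subring_det => i' j'; rewrite !mxE.
Qed.

End Subring.

Section LocallyNilpotentDerivation.
Variables (B : comNzRingType) (R : B -> Prop) (D : B -> B).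
Hypotheses (hR : is_subring R) (hD : is_LND_on R D).

Definition kernel x := R x /\ D x = 0.

Lemma lnd_closed x : R x -> R (D x). Proof. by case: hD => + _ _ _; apply. Qed.
Lemma lndD x y : R x -> R y -> D (x + y) = D x + D y.
Proof. by case: hD => _ + _ _; apply. Qed.
Lemma lndM x y : R x -> R y -> D (x * y) = x * D y + y * D x.
Proof. by case: hD => _ _ + _; apply. Qed.
Lemma lnd_nilpotent x : R x -> exists m, iter m D x = 0.
Proof. by case: hD => _ _ _; apply. Qed.

Lemma iter_lnd_closed k x : R x -> R (iter k D x).
Proof. by move=> Rx; elim: k => //= k; apply: lnd_closed. Qed.

Lemma lnd0 : D 0 = 0.
Proof.
have R0 := subring0 hR; have := lndD R0 R0; rewrite addr0 => D0E.
by apply: (@addIr _ (D 0)); rewrite add0r -D0E.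
Qed.

Lemma lnd1 : D 1 = 0.
Proof.
have R1 := subring1 hR; have := lndM R1 R1; rewrite mulr1 !mul1r => D1E.
by apply: (@addIr _ (D 1)); rewrite add0r -D1E.
Qed.

Lemma lndN x : R x -> D (- x) = - D x.
Proof.
move=> Rx; apply/eqP; rewrite -addr_eq0 -lndD ?addNr ?lnd0 //.
exact: subringN hR _ Rx.
Qed.

Lemma lndB x y : R x -> R y -> D (x - y) = D x - D y.
Proof. by move=> Rx Ry; rewrite lndD ?lndN //; apply: subringN hR _ Ry. Qed.

Lemma lndMn x k : R x -> D (x *+ k) = D x *+ k.
Proof.
move=> Rx; elim: k => [|k IHk]; first exact: lnd0.
by rewrite !mulrS lndD ?IHk //; apply: subringMn hR _ _ Rx.
Qed.

Lemma lnd_sum (I : Type) (r : seq I) (P : pred I) (F : I -> B) :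
    (forall i, P i -> R (F i)) ->
  D (\sum_(i <- r | P i) F i) = \sum_(i <- r | P i) D (F i).
Proof.
move=> RF; suff [] : R (\sum_(i <- r | P i) F i) /\
    D (\sum_(i <- r | P i) F i) = \sum_(i <- r | P i) D (F i) by [].
elim/big_rec2: _ => [|i x y Pi [Rx <-]]; first by split; [apply: subring0 hR | apply: lnd0].
by have RFi := RF i Pi; split; [exact: (subringD hR) | rewrite lndD].
Qed.

Lemma iter_lnd0 k : iter k D 0 = 0.
Proof. by elim: k => //= k ->; apply: lnd0. Qed.

Lemma iter_lndN k x : R x -> iter k D (- x) = - iter k D x.
Proof. by move=> Rx; elim: k => //= k ->; rewrite lndN //; apply: iter_lnd_closed. Qed.

Lemma iter_lnd_sum k (I : Type) (r : seq I) (P : pred I) (F : I -> B) :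
    (forall i, P i -> R (F i)) ->
  iter k D (\sum_(i <- r | P i) F i) = \sum_(i <- r | P i) iter k D (F i).
Proof.
move=> RF; elim: k => //= k ->.
by rewrite lnd_sum // => i Pi; apply/iter_lnd_closed/RF.
Qed.

Lemma lndZ c x : kernel c -> R x -> D (c * x) = c * D x.
Proof. by move=> [Rc Dc] Rx; rewrite lndM // Dc mulr0 addr0. Qed.

Lemma iter_lndZ k c x : kernel c -> R x -> iter k D (c * x) = c * iter k D x.
Proof. by move=> kc Rx; elim: k => //= k ->; rewrite lndZ //; apply: iter_lnd_closed. Qed.

Lemma lndX x k : R x -> D (x ^+ k.+1) = x ^+ k * D x *+ k.+1.
Proof.
move=> Rx; elim: k => [|k IHk]; first by rewrite expr0 mul1r.
rewrite exprS lndM ?IHk //; last exact: subringX.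
by rewrite mulrnAr mulrA -exprS -mulrSr.
Qed.

Lemma iter_lndM k a b : R a -> R b ->
  iter k D (a * b) = \sum_(i < k.+1) (iter (k - i) D a * iter i D b) *+ 'C(k, i).
Proof.
move=> Ra Rb; pose T i j := iter i D a * iter j D b.
have RT i j : R (T i j) by rewrite /T; apply: (subringM hR); apply: iter_lnd_closed.
suff: iter k D (a * b) = \sum_(0 <= i < k.+1) T (k - i)%N i *+ 'C(k, i) by rewrite big_mkord.
elim: k => [|k IHk]; first by rewrite big_nat1.
rewrite iterS IHk lnd_sum => [|i _]; last exact/(subringMn hR)/RT.
rewrite (eq_bigr (fun i => T (k - i)%N.+1 i *+ 'C(k, i) + T (k - i)%N i.+1 *+ 'C(k, i)));
  last first.
  move=> i _; rewrite (lndMn _ (RT _ _)).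
  rewrite (lndM (iter_lnd_closed _ Ra) (iter_lnd_closed _ Rb)) mulrnDl addrC.
  by rewrite [iter i D b * _]mulrC.
rewrite big_split big_nat_recl // [in RHS]big_nat_recl // big_nat_recr // [in RHS]big_nat_recr //=.
rewrite !subn0 !bin0 subnn subSS subnn !binn -!addrA; congr (_ + _).
rewrite addrA -big_split /=; congr (_ + _); apply: eq_big_nat => i /andP[_ lt_ik].
by rewrite subnSK // subSS binS mulrnDr.
Qed.

Lemma kernel_subring : is_subring kernel.
Proof.
have [R0 R1] := (subring0 hR, subring1 hR).
split; [by split; last exact: lnd0 | by split; last exact: lnd1 | |].
  by move=> x y [Rx Dx] [Ry Dy]; split; [apply: subringB | rewrite lndB // Dx Dy subrr].
by move=> x y [Rx Dx] [Ry Dy]; split; [apply: subringM | rewrite lndM // Dx Dy !mulr0 addr0].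
Qed.

End LocallyNilpotentDerivation.

Section Divisibility.
Variable B : idomainType.

Definition divides (x z : B) := exists u, z = x * u.

Definition rel_coprime (x y : B) :=
  forall z, divides x z -> divides y z -> divides (x * y) z.

Lemma divides_refl x : divides x x. Proof. by exists 1; rewrite mulr1. Qed.

Lemma divides_trans x y z : divides x y -> divides y z -> divides x z.
Proof. by case=> u -> [v ->]; exists (u * v); rewrite mulrA. Qed.

Lemma divides_mulr x z w : divides x z -> divides x (z * w).
Proof. by case=> u ->; exists (u * w); rewrite mulrA. Qed.

Lemma divides_mull x z w : divides x z -> divides x (w * z).
Proof. by rewrite mulrC; apply: divides_mulr. Qed.

Lemma dividesN x z : divides x z -> divides x (- z).
Proof. by case=> u ->; exists (- u); rewrite mulrN. Qed.

Lemma divides_sum (I : Type) (r : seq I) (P : pred I) (F : I -> B) x :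
  (forall i, P i -> divides x (F i)) -> divides x (\sum_(i <- r | P i) F i).
Proof.
move=> dvF; apply: big_ind => //; first by exists 0; rewrite mulr0.
by move=> _ _ [u ->] [v ->]; exists (u + v); rewrite mulrDr.
Qed.

Lemma dividesX x a b : (a <= b)%N -> divides (x ^+ a) (x ^+ b).
Proof. by move=> le_ab; exists (x ^+ (b - a)); rewrite -exprD subnKC. Qed.

Lemma divides_det_col k (A : 'M[B]_k) j x :
  (forall i, divides x (A i j)) -> divides x (\det A).
Proof.
move=> dvA; rewrite (expand_det_col _ j).
by apply: divides_sum => i _; apply/divides_mulr/dvA.
Qed.

Lemma rel_coprime_sym x y : rel_coprime x y -> rel_coprime y x.
Proof. by move=> cxy z dy dx; rewrite mulrC; apply: cxy. Qed.

Lemma rel_coprime1 x : rel_coprime x 1.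
Proof. by move=> z dx _; rewrite mulr1. Qed.

Lemma rel_coprimeM x y w : rel_coprime x y -> rel_coprime x w -> rel_coprime x (y * w).
Proof.
move=> cxy cxw z dx [t Ez].
have [y0 | nz_y] := eqVneq y 0; first by exists 0; rewrite Ez y0 !(mul0r, mulr0).
have [r Er] : divides (x * y) z.
  by apply: cxy dx _; exists (w * t); rewrite Ez mulrA.
have [s Es] : divides (x * w) (x * r).
  apply: cxw; first exact: divides_mulr (divides_refl _).
  suff -> : x * r = w * t by apply: divides_mulr (divides_refl _).
  by apply: (mulfI nz_y); rewrite !mulrA [y * x]mulrC -Er Ez.
by exists s; rewrite Er mulrAC Es; ring.
Qed.

Lemma rel_coprimeX x y k : rel_coprime x y -> rel_coprime x (y ^+ k).
Proof.
move=> cxy; elim: k => [|k IHk]; first exact: rel_coprime1.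
by rewrite exprS; apply: rel_coprimeM.
Qed.

Lemma rel_coprimeXX x y k l : rel_coprime x y -> rel_coprime (x ^+ k) (y ^+ l).
Proof. by move=> cxy; apply/rel_coprimeX/rel_coprime_sym/rel_coprimeX/rel_coprime_sym. Qed.

Lemma divides_prod (I : finType) (S : {set I}) (F : I -> B) z :
    {in S &, forall i j, i != j -> rel_coprime (F i) (F j)} ->
    {in S, forall i, divides (F i) z} ->
  divides (\prod_(i in S) F i) z.
Proof.
move=> cF dvF; rewrite -big_enum /=.
have: {subset enum S <= S} by move=> i; rewrite mem_enum.
elim: (enum S) (enum_uniq S) => [_ _ | i s IHs /andP[s'i uniq_s] sS].
  by rewrite big_nil; exists z; rewrite mul1r.
have Si : i \in S by apply: sS; rewrite inE eqxx.
have {}sS : {subset s <= S} by move=> j sj; apply: sS; rewrite inE sj orbT.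
rewrite big_cons; apply: (_ : rel_coprime _ _) (dvF _ Si) (IHs uniq_s sS).
rewrite big_seq; apply: big_ind => [|u v|j sj]; first exact: rel_coprime1.
  exact: rel_coprimeM.
by apply: cF => //; [apply: sS | apply: contraNneq s'i => ->].
Qed.

End Divisibility.

Section Degree.
Variables (B : idomainType) (R : B -> Prop) (D : B -> B).
Hypotheses (hR : is_subring R) (hD : is_LND_on R D).

(* Arbitrary when x is not in R, where D need not be nilpotent. *)
Definition deg (x : B) : nat :=
  epsilon (inhabits 0%N)
    (fun p => iter p.+1 D x = 0 /\ forall q, iter q.+1 D x = 0 -> (p <= q)%N).

Lemma deg_spec x : R x ->
  iter (deg x).+1 D x = 0 /\ forall q, iter q.+1 D x = 0 -> (deg x <= q)%N.
Proof.
move=> Rx; have [m Dm] : exists m, iter m.+1 D x == 0.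
  by have [m Dm] := lnd_nilpotent hD Rx; exists m; rewrite iterS Dm (lnd0 hR hD).
apply: (epsilon_spec _ (fun p => iter p.+1 D x = 0 /\ forall q, _ -> _)).
have [p /eqP Dp min_p] := ex_minnP (ex_intro (fun m => iter m.+1 D x == 0) m Dm).
by exists p; split=> // q /eqP/min_p.
Qed.

Lemma deg_leE x p : R x -> (deg x <= p)%N = (iter p.+1 D x == 0).
Proof.
move=> Rx; have [Ddeg min_deg] := deg_spec Rx; apply/idP/eqP => [le_dp|]; last exact: min_deg.
by rewrite -(subnK le_dp) -addnS iterD Ddeg (iter_lnd0 hR hD).
Qed.

Lemma iter_gt_deg x m : R x -> (deg x < m)%N -> iter m D x = 0.
Proof. by case: m => // m Rx; rewrite ltnS deg_leE // => /eqP. Qed.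

Lemma iter_deg_neq0 x : R x -> x != 0 -> iter (deg x) D x != 0.
Proof.
move=> Rx nz_x; case Edeg: (deg x) => [|p] //.
by apply/eqP => Dp; move: (deg_leE p Rx); rewrite Edeg ltnn Dp eqxx.
Qed.

Lemma leq_deg_iter x p : R x -> iter p D x != 0 -> (p <= deg x)%N.
Proof. by move=> Rx; apply: contraR; rewrite -ltnNge => /(iter_gt_deg Rx) ->. Qed.

Lemma deg0 : deg 0 = 0%N.
Proof. by apply/eqP; rewrite -leqn0 deg_leE ?(iter_lnd0 hR hD) //; apply: subring0. Qed.

Lemma deg_eq0 x : R x -> (deg x == 0%N) = (D x == 0).
Proof. by move=> Rx; rewrite -leqn0 deg_leE. Qed.

Lemma deg1 : deg 1 = 0%N.
Proof. by apply/eqP; rewrite deg_eq0 ?(lnd1 hR hD) //; apply: (subring1 hR). Qed.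

Lemma deg_iter x j : R x -> deg (iter j D x) = (deg x - j)%N.
Proof.
move=> Rx; have Rjx := iter_lnd_closed hD j Rx; apply/eqP; rewrite eqn_leq.
rewrite deg_leE // -iterD iter_gt_deg // ?eqxx /=; last by lia.
have [->|nz_x] := eqVneq x 0; first by rewrite deg0.
have [le_jd|/ltnW] := leqP j (deg x); last by rewrite -subn_eq0 => /eqP->.
by apply: leq_deg_iter => //; rewrite -iterD subnK // iter_deg_neq0.
Qed.

Hypothesis hchar : [pchar B] =i pred0.

Lemma degM a b : R a -> R b -> a != 0 -> b != 0 -> deg (a * b) = (deg a + deg b)%N.
Proof.
move=> Ra Rb nz_a nz_b; have Rab := subringM hR Ra Rb.
apply/eqP; rewrite eqn_leq deg_leE // (iter_lndM hR hD _ Ra Rb) big1 ?eqxx /=; last first.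
  move=> i _; have [le_ib|lt_bi] := leqP i (deg b).
    by rewrite iter_gt_deg ?mul0r ?mul0rn //; lia.
  by rewrite (iter_gt_deg Rb lt_bi) mulr0 mul0rn.
apply: leq_deg_iter => //; rewrite (iter_lndM hR hD _ Ra Rb).
have lt_b : (deg b < (deg a + deg b).+1)%N by rewrite ltnS leq_addl.
rewrite (bigD1 (Ordinal lt_b)) // big1 => [|i ne_ib].
  rewrite /= addnK addr0 -mulr_natr !mulf_neq0 ?iter_deg_neq0 //.
  by move/pcharf0P: hchar => ->; rewrite -lt0n bin_gt0 leq_addl.
have {}ne_ib : i != deg b :> nat by apply: contraNneq ne_ib => eq_ib; apply/eqP/val_inj.
have [lt_ib|lt_bi|eq_ib] := ltngtP i (deg b); last by rewrite eq_ib eqxx in ne_ib.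
  by rewrite (iter_gt_deg Ra) ?mul0r ?mul0rn //; lia.
by rewrite (iter_gt_deg Rb lt_bi) mulr0 mul0rn.
Qed.

Lemma degX y k : R y -> deg (y ^+ k) = (k * deg y)%N.
Proof.
move=> Ry; have [-> | nz_y] := eqVneq y 0.
  by case: k => [|k]; rewrite ?expr0 ?deg1 ?expr0n ?deg0 ?muln0.
elim: k => [|k IHk]; first by rewrite expr0 deg1.
by rewrite exprS degM ?IHk ?expf_neq0 //; apply: (subringX hR).
Qed.

Lemma deg_prod (I : Type) (r : seq I) (P : pred I) (F : I -> B) :
    (forall i, P i -> R (F i) /\ F i != 0) ->
  deg (\prod_(i <- r | P i) F i) = (\sum_(i <- r | P i) deg (F i))%N.
Proof.
move=> RF; suff [] : [/\ R (\prod_(i <- r | P i) F i), \prod_(i <- r | P i) F i != 0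
  & deg (\prod_(i <- r | P i) F i) = (\sum_(i <- r | P i) deg (F i))%N] by [].
elim/big_rec2: _ => [|i x n Pi [Rx nz_x <-]].
  by split; [apply: (subring1 hR) | apply: oner_neq0 | apply: deg1].
have [RFi nz_Fi] := RF i Pi.
by split; [apply: (subringM hR) | rewrite mulf_neq0 | rewrite degM].
Qed.

Lemma degZ c x : kernel R D c -> c != 0 -> R x -> deg (c * x) = deg x.
Proof.
move=> [Rc Dc] nz_c Rx; have [-> | nz_x] := eqVneq x 0; first by rewrite mulr0.
by rewrite degM // (eqP (_ : deg c == 0%N)) // deg_eq0 // Dc.
Qed.

Lemma deg_sum_le (I : Type) (r : seq I) (P : pred I) (F : I -> B) m :
    (forall i, P i -> R (F i) /\ (deg (F i) <= m)%N) ->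
  (deg (\sum_(i <- r | P i) F i) <= m)%N.
Proof.
move=> RF; rewrite deg_leE; last by apply: (subring_sum hR) => i /RF[].
rewrite (iter_lnd_sum hR hD) => [|i /RF[]//]; apply/eqP/big1 => i /RF[RFi].
by rewrite deg_leE // => /eqP.
Qed.

Lemma kernel_factorially_closed :
  factorially_closed R -> factorially_closed (kernel R D).
Proof.
move=> fcR x y nz_x nz_y [Rxy Dxy]; have [Rx Ry] := fcR x y nz_x nz_y Rxy.
have /eqP := Dxy; rewrite -deg_eq0 // degM // addn_eq0 => /andP[dx dy].
by split; split=> //; apply/eqP; rewrite -deg_eq0.
Qed.

Lemma deg_le_divides p w : factorially_closed R -> R p -> R w -> w != 0 ->
  divides p w -> (deg p <= deg w)%N.
Proof.
move=> fcR Rp Rw nz_w [q Ew]; move: nz_w Rw; rewrite Ew mulf_eq0 negb_or => /andP[nz_p nz_q] Rpq.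
by have [_ Rq] := fcR p q nz_p nz_q Rpq; rewrite degM ?leq_addr.
Qed.

End Degree.

Lemma det_neq0_mulmx_eq0 (B : idomainType) k l (A : 'M[B]_k) (u : 'M[B]_(k, l)) :
  \det A != 0 -> A *m u = 0 -> u = 0.
Proof.
move=> nzA Au0; apply/matrixP => i j; apply/eqP.
have := congr1 (mulmx (\adj A)) Au0; rewrite mulmxA mul_adj_mx mul_scalar_mx mulmx0.
by move/matrixP/(_ i j); rewrite !mxE => /eqP; rewrite mulf_eq0 (negbTE nzA).
Qed.

Lemma det_col_sum (B : comNzRingType) k (A : 'M[B]_k) j0 :
  \det (\matrix_(i, j) if j == j0 then \sum_l A i l else A i j) = \det A.
Proof.
set A' := \matrix_(i, j) _; rewrite (expand_det_col _ j0).
have cofE i : cofactor A' i j0 = cofactor A i j0.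
  by congr (_ * \det _); apply/matrixP => i' j'; rewrite !mxE eq_sym (negbTE (neq_lift _ _)).
under eq_bigr => i _ do rewrite cofE mxE eqxx mulr_suml.
rewrite exchange_big /= (bigD1 j0) //= [X in _ + X]big1 ?addr0 => [|j nz_j].
  transitivity ((\adj A *m A) j0 j0); last by rewrite mul_adj_mx mxE eqxx mulr1n.
  by rewrite mxE; apply: eq_bigr => i _; rewrite mxE mulrC.
transitivity ((\adj A *m A) j0 j); last by rewrite mul_adj_mx mxE eq_sym (negbTE nz_j) mulr0n.
by rewrite mxE; apply: eq_bigr => i _; rewrite mxE mulrC.
Qed.

Section Wronskian.
Variables (B : idomainType) (R : B -> Prop) (D : B -> B).
Hypotheses (hR : is_subring R) (hD : is_LND_on R D).

Lemma divides_iter_expr y e j : R y -> divides (y ^+ (e - j)) (iter j D (y ^+ e)).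
Proof.
move=> Ry; suff [g [_ ->]] : exists g, R g /\ iter j D (y ^+ e) = y ^+ (e - j) * g.
  exact: divides_mulr (divides_refl _).
elim: j => [|j [g [Rg IHj]]]; first by exists 1; rewrite subn0 mulr1; split; first exact: subring1.
rewrite iterS IHj subnS; case: (e - j)%N => [|l] /=.
  by exists (D g); rewrite expr0 !mul1r; split; first exact: lnd_closed hD _ Rg.
exists (y * D g + g * D y *+ l.+1); split.
  apply: (subringD hR); first by apply: (subringM hR) => //; apply: lnd_closed hD _ Rg.
  by apply/(subringMn hR)/(subringM hR) => //; apply: lnd_closed hD _ Ry.
by rewrite (lndM hD (subringX hR _ Ry) Rg) (lndX hR hD _ Ry) exprS; ring.
Qed.

Lemma iter_lnd_proportional a b : R a -> R b -> a != 0 -> a * D b = D a * b ->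
  forall k, a * iter k D b = iter k D a * b.
Proof.
move=> Ra Rb nz_a Eab; elim=> [|k IHk] //=.
have [Rka Rkb] := (iter_lnd_closed hD k Ra, iter_lnd_closed hD k Rb).
have := congr1 D IHk; rewrite !(lndM hD) //.
suff -> : iter k D b * D a = iter k D a * D b by rewrite [RHS]addrC => /addIr ->; rewrite mulrC.
by apply: (mulfI nz_a); rewrite mulrA IHk [RHS]mulrCA Eab mulrA mulrAC.
Qed.

Lemma kernel_iter_deg a b : R a -> R b -> a != 0 -> a * D b = D a * b ->
  kernel R D (iter (deg D a) D b) /\ a * iter (deg D a) D b = iter (deg D a) D a * b.
Proof.
move=> Ra Rb nz_a Eab; have Eiter := iter_lnd_proportional Ra Rb nz_a Eab.
split=> //; split; first exact: iter_lnd_closed.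
apply: (mulfI nz_a); rewrite mulr0 -[D _]/(iter (deg D a).+1 D b) Eiter.
by rewrite (iter_gt_deg hR hD Ra (ltnSn _)) mul0r.
Qed.

Definition wronskian k (f : 'I_k -> B) : 'M[B]_k := \matrix_(j, i) iter j D (f i).

Lemma wronskianE k (f : 'I_k -> B) j i : wronskian f j i = iter j D (f i).
Proof. exact: mxE. Qed.

(* The cofactors v of the last row solve the first m rows of the Wronskian system;
   differentiating shows that v ord_max * D v - D (v ord_max) * v solves the
   invertible system of the first m functions, so v is proportional over ker D
   and applying D^(deg (v ord_max)) to it gives constant coefficients. *)
Lemma wronskian_dep_last m (f : 'I_m.+1 -> B) : (forall i, R (f i)) ->
    \det (wronskian f) = 0 -> \det (wronskian (fun i => f (lift ord_max i))) != 0 ->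
  exists b, [/\ forall i, kernel R D (b i), b ord_max != 0 & \sum_i b i * f i = 0].
Proof.
move=> Rf detW0 nzW; pose v i := cofactor (wronskian f) ord_max i.
have Rv i : R (v i).
  by apply: (subring_cofactor hR) => j l; rewrite wronskianE; apply/(iter_lnd_closed hD)/Rf.
have rel j : (j <= m)%N -> \sum_i iter j D (f i) * v i = 0.
  move=> le_jm; transitivity ((wronskian f *m \adj (wronskian f)) (inord j) ord_max).
    by rewrite mxE; apply: eq_bigr => i _; rewrite wronskianE inordK // mxE.
  by rewrite mul_mx_adj detW0 mxE mul0rn.
have relD j : (j < m)%N -> \sum_i iter j D (f i) * D (v i) = 0.
  move=> lt_jm; have := congr1 D (rel j (ltnW lt_jm)).
  rewrite (lnd0 hR hD) (lnd_sum hR hD) => [|i _]; last first.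
    exact/(subringM hR)/Rv/(iter_lnd_closed hD)/Rf.
  under eq_bigr do rewrite (lndM hD (iter_lnd_closed hD _ (Rf _)) (Rv _)) [v _ * _]mulrC.
  by rewrite big_split /= (rel j.+1) // addr0.
have vmax : v ord_max = \det (wronskian (fun i => f (lift ord_max i))).
  rewrite /v /cofactor addnn -signr_odd odd_double expr0 mul1r; congr (\det _).
  by apply/matrixP => j i; rewrite !mxE lift_max.
have prop i : v ord_max * D (v i) = D (v ord_max) * v i.
  pose u := \col_(i < m) (v ord_max * D (v (lift ord_max i)) - D (v ord_max) * v (lift ord_max i)).
  have /(det_neq0_mulmx_eq0 nzW) u0 : wronskian (fun i => f (lift ord_max i)) *m u = 0.
    apply/matrixP => j l; rewrite !mxE.
    transitivity (v ord_max * \sum_i iter j D (f i) * D (v i)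
                  - D (v ord_max) * \sum_i iter j D (f i) * v i).
      rewrite !mulr_sumr -sumrB (bigD1_ord ord_max) //= -[LHS]add0r; congr (_ + _); first ring.
      by apply: eq_bigr => i' _; rewrite !mxE; ring.
    by rewrite relD // rel 1?ltnW // !mulr0 subrr.
  have [i' ->|->] := unliftP ord_max i; last by rewrite mulrC.
  by apply/eqP; rewrite -subr_eq0; have := congr1 (fun M : 'cV_m => M i' 0) u0; rewrite !mxE => ->.
have nz_vmax : v ord_max != 0 by rewrite vmax.
have kEb i := kernel_iter_deg (Rv ord_max) (Rv i) nz_vmax (prop i).
exists (fun i => iter (deg D (v ord_max)) D (v i)); split.
- by move=> i; case: (kEb i).
- exact: (iter_deg_neq0 hR hD (Rv ord_max) nz_vmax).
- apply: (mulfI nz_vmax); rewrite mulr0 mulr_sumr.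
  under eq_bigr => i _ do rewrite mulrA (proj2 (kEb i)) -mulrA [v i * _]mulrC.
  by rewrite -mulr_sumr (rel 0%N) ?mulr0.
Qed.

Lemma wronskian_dep m (f : 'I_m -> B) : (forall i, R (f i)) -> \det (wronskian f) = 0 ->
  exists b, [/\ forall i, kernel R D (b i), exists i, b i != 0 & \sum_i b i * f i = 0].
Proof.
elim: m f => [|m IHm] f Rf detW0; first by move/eqP: detW0; rewrite det_mx00 oner_eq0.
have [detg0|nz_detg] := eqVneq (\det (wronskian (fun i => f (lift ord_max i)))) 0; last first.
  have [b [kb nz_b Eb]] := wronskian_dep_last Rf detW0 nz_detg.
  by exists b; split=> //; exists ord_max.
have [b [kb [i0 nz_b] Eb]] := IHm _ (fun i => Rf _) detg0.
exists (fun i => if unlift ord_max i is Some j then b j else 0); split.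
- move=> i; case: unliftP => [j _|_]; first exact: kb.
  exact: subring0 (kernel_subring hR hD).
- by exists (lift ord_max i0); rewrite liftK.
- rewrite (bigD1_ord ord_max) //= unlift_none mul0r add0r -[RHS]Eb.
  by apply: eq_bigr => i _; rewrite liftK.
Qed.

Hypothesis hchar : [pchar B] =i pred0.

(* Every nonzero term of the permutation expansion of the determinant has
   degree sum_i deg (f i) - k(k-1)/2. *)
Lemma deg_det_wronskian k (f : 'I_k -> B) : (forall i, R (f i)) -> \det (wronskian f) != 0 ->
  (deg D (\det (wronskian f)) + 'C(k, 2) <= \sum_i deg D (f i))%N.
Proof.
rewrite -bin2_sum big_mkord => Rf; pose P (s : 'S_k) := \prod_(i < k) iter i D (f (s i)).
have RP s : R (P s) by apply: (subring_prod hR) => i _; apply/(iter_lnd_closed hD)/Rf.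
have degP s : P s != 0 -> (deg D (P s) + \sum_(i < k) i = \sum_i deg D (f i))%N.
  move=> nzP; have nz_i (i : 'I_k) : iter i D (f (s i)) != 0.
    by move/prodf_neq0: nzP; apply.
  rewrite (deg_prod hR hD hchar) => [|i _]; last first.
    by split; [apply/(iter_lnd_closed hD)/Rf | apply: nz_i].
  rewrite [RHS](reindex_inj (@perm_inj _ s)) /= -big_split /=; apply: eq_bigr => i _.
  by rewrite (deg_iter hR hD) ?subnK ?(leq_deg_iter hR hD).
have -> : \det (wronskian f) = \sum_(s : 'S_k) (-1) ^+ s * P s.
  by apply: eq_bigr => s _; congr (_ * _); apply: eq_bigr => i _; rewrite wronskianE.
move=> nzW; have /existsP[s nz_s] : [exists s, P s != 0].
  apply: contraNT nzW => /existsPn P0; apply/eqP/big1 => s _.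
  by have /negPn/eqP-> := P0 s; rewrite mulr0.
rewrite -(degP s nz_s) leq_add2r; apply: (deg_sum_le hR hD) => s' _.
split; first exact/(subringM hR)/RP/(subring_sign hR).
have [->|nz_s'] := eqVneq (P s') 0; first by rewrite mulr0 (deg0 hR hD).
rewrite (degZ hR hD hchar) ?signr_eq0 //; last exact: subring_sign (kernel_subring hR hD) _.
by apply/eq_leq/(@addIn (\sum_(i < k) i)%N); rewrite !degP.
Qed.

End Wronskian.

Lemma weighted_sum_le (I : finType) (S : {set I}) (Q : pred I) (d e : I -> nat) M k :
    {in S, forall i, ~~ Q i -> d i = 0%N} -> {in S, forall i, 0 < e i}%N ->
    {in S, forall i, e i * d i <= M}%N ->
    k%:R * \sum_(i in S | Q i) ((e i)%:R : rat)^-1 <= 1 ->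
  (k * \sum_(i in S) d i <= M)%N.
Proof.
move=> dQ e_gt0 edM wsum; rewrite -(ler_nat rat) natrM natr_sum.
rewrite (bigID Q) /= [X in _ + X]big1 ?addr0 => [|i /andP[Si nQi]]; last by rewrite dQ.
apply: le_trans (_ : k%:R * (M%:R * \sum_(i in S | Q i) ((e i)%:R)^-1) <= _).
  rewrite ler_wpM2l // mulr_sumr ler_sum // => i /andP[Si _].
  by rewrite ler_pdivlMr ?ltr0n ?e_gt0 // -natrM ler_nat mulnC edM.
by rewrite mulrCA ler_piMr.
Qed.

Section MasonStothers.
Variables (B : idomainType) (R : B -> Prop) (D : B -> B).
Hypotheses (hR : is_subring R) (hD : is_LND_on R D) (hchar : [pchar B] =i pred0).
Hypothesis fcR : factorially_closed R.
Variables (I : finType) (n : nat).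

(* n bounds the number of terms rather than being #|S|, so that admissibility
   passes to subfamilies. *)
Definition admissible (S : {set I}) (y : I -> B) (e : I -> nat) :=
  [/\ (#|S| <= n)%N, {in S, forall i, R (y i)}, {in S, forall i, 0 < e i}%N,
      {in S &, forall i j, i != j -> rel_coprime (y i) (y j)} &
      (n - 2)%:R * \sum_(i in S | D (y i) != 0) ((e i)%:R : rat)^-1 <= 1].

Definition nonzero_constants (S : {set I}) (c : I -> B) :=
  {in S, forall i, kernel R D (c i) /\ c i != 0}.

Definition abc_holds (S : {set I}) :=
  forall y e c, admissible S y e -> nonzero_constants S c ->
  \sum_(i in S) c i * y i ^+ e i = 0 -> {in S, forall i, D (y i) = 0}.

Lemma admissible_sub (S T : {set I}) y e : T \subset S -> admissible S y e -> admissible T y e.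
Proof.
move=> sTS [le_Sn Ry e_gt0 cop wsum]; have sub := subsetP sTS.
split; first exact: leq_trans (subset_leq_card sTS) le_Sn.
- by move=> i /sub; apply: Ry.
- by move=> i /sub; apply: e_gt0.
- by move=> i j /sub Si /sub Sj; apply: cop.
apply: le_trans wsum; rewrite ler_wpM2l // !big_mkcondr /= [X in _ <= X](big_setID T) /=.
by rewrite (setIidPr sTS) lerDl; apply: sumr_ge0 => i _; case: ifP; rewrite ?invr_ge0.
Qed.

Lemma admissible_add_unit (T : {set I}) j0 y e : j0 \notin T -> (#|T| < n)%N ->
    admissible T y e ->
  admissible (j0 |: T) [eta y with j0 |-> 1] [eta e with j0 |-> 1%N].
Proof.
move=> T'j0 lt_Tn [_ Ry e_gt0 cop wsum]; split.
- by rewrite cardsU1 T'j0.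
- by move=> i; rewrite in_setU1 /=; case: eqP => [_ _|_ /Ry //]; apply: subring1 hR.
- by move=> i; rewrite in_setU1 /=; case: eqP => // _ /e_gt0.
- move=> i j; rewrite !in_setU1 /=; case: eqP => [_ _|_ /= Ti]; case: eqP => [_ _|_ /= Tj] ne_ij.
  + exact: rel_coprime1.
  + exact/rel_coprime_sym/rel_coprime1.
  + exact: rel_coprime1.
  + exact: cop.
apply: le_trans wsum; rewrite big_mkcondr big_setU1 //= eqxx (lnd1 hR hD) eqxx add0r.
rewrite [X in _ <= _ * X]big_mkcondr /= le_eqVlt; apply/orP; left; apply/eqP.
congr (_ * _); apply: eq_bigr => i Ti.
have ne_ij0 : i != j0 by apply: contraNneq T'j0 => <-.
by rewrite /= (negbTE ne_ij0).
Qed.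

Lemma abc_holds_add_constant (T : {set I}) j0 y e c C : j0 \notin T -> (#|T| < n)%N ->
    abc_holds (j0 |: T) -> admissible T y e -> nonzero_constants T c ->
    kernel R D C -> C != 0 -> \sum_(i in T) c i * y i ^+ e i + C = 0 ->
  {in T, forall i, D (y i) = 0}.
Proof.
move=> T'j0 lt_Tn abcT admT ccT kC nzC rel i Ti.
have neq_j0 l : l \in T -> l != j0 by move=> Tl; apply: contraNneq T'j0 => <-.
suff /(_ i) : {in j0 |: T, forall l, D ([eta y with j0 |-> 1] l) = 0}.
  by rewrite /= (negbTE (neq_j0 _ Ti)) in_setU1 Ti orbT; apply.
apply: (abcT _ _ [eta c with j0 |-> C] (admissible_add_unit T'j0 lt_Tn admT)).
  by move=> l; rewrite in_setU1 /=; case: eqP => [_ _|_ /ccT //]; split.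
rewrite big_setU1 //= !eqxx expr1 mulr1 addrC -[RHS]rel; congr (_ + _).
by apply: eq_bigr => l Tl; rewrite (negbTE (neq_j0 _ Tl)).
Qed.

Definition wronskian_on (S : {set I}) (F : I -> B) : 'M[B]_#|S| :=
  wronskian D (fun r => F (enum_val r)).

Lemma wronskian_on_dep (S : {set I}) F : {in S, forall i, R (F i)} ->
    \det (wronskian_on S F) = 0 ->
  exists b, [/\ forall i, kernel R D (b i), exists2 i, i \in S & b i != 0
               & \sum_(i in S) b i * F i = 0].
Proof.
move=> RF /(wronskian_dep hR hD) [|b' [kb' [r0 nz_b'] Eb']]; first by move=> r; apply/RF/enum_valP.
pose b i := \sum_(r < #|S| | enum_val r == i) b' r.
have bE r : b (enum_val r) = b' r.
  by rewrite /b (big_pred1 r) // => r'; rewrite (inj_eq enum_val_inj).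
exists b; split.
- by move=> i; apply: subring_sum (kernel_subring hR hD) _ _ _ _ (fun r _ => kb' r).
- by exists (enum_val r0); [apply: enum_valP | rewrite bE].
- by rewrite big_enum_val -[RHS]Eb'; apply: eq_bigr => r _; rewrite bE.
Qed.

Lemma deg_det_wronskian_on (S : {set I}) F : {in S, forall i, R (F i)} ->
    \det (wronskian_on S F) != 0 ->
  (deg D (\det (wronskian_on S F)) + 'C(#|S|, 2) <= \sum_(i in S) deg D (F i))%N.
Proof.
move=> RF nzW; rewrite [X in (_ <= X)%N]big_enum_val.
by apply: (deg_det_wronskian hR hD hchar) => // r; apply/RF/enum_valP.
Qed.

Lemma divides_det_wronskian_on (S : {set I}) F a i : i \in S ->
    (forall j, (j < #|S|)%N -> divides a (iter j D (F i))) ->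
  divides a (\det (wronskian_on S F)).
Proof.
move=> Si dvF; apply: (divides_det_col (j := enum_rank_in Si i)) => r.
by rewrite wronskianE enum_rankK_in //; apply: dvF.
Qed.

Lemma divides_det_wronskian_on_sum (S : {set I}) F a : {in S, forall i, R (F i)} ->
    (0 < #|S|)%N -> (forall j, (j < #|S|)%N -> divides a (iter j D (\sum_(i in S) F i))) ->
  divides a (\det (wronskian_on S F)).
Proof.
move=> RF S_gt0 dvF; rewrite -(det_col_sum _ (Ordinal S_gt0)).
apply: (divides_det_col (j := Ordinal S_gt0)) => r; rewrite mxE eqxx.
suff -> : \sum_l wronskian_on S F r l = iter r D (\sum_(i in S) F i) by apply: dvF.
rewrite (iter_lnd_sum hR hD) => [|i /RF //]; rewrite [in RHS]big_enum_val.
by apply: eq_bigr => l _; rewrite wronskianE.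
Qed.

Lemma divides_det_wronskian_prod (S : {set I}) y e c t :
    admissible S y e -> nonzero_constants S c -> \sum_(i in S) c i * y i ^+ e i = 0 ->
    t \in S -> (1 < #|S|)%N ->
  divides (\prod_(i in S) y i ^+ (e i - (#|S| - 2)))
          (\det (wronskian_on (S :\ t) (fun i => c i * y i ^+ e i))).
Proof.
move=> [_ Ry _ cop _] cc rel St S_gt1.
set S' := S :\ t; set F := fun i => c i * y i ^+ e i.
have cardS : #|S| = #|S'|.+1 by rewrite (cardsD1 t S) St.
have RF i : i \in S -> R (F i).
  by move=> Si; have [[Rc _] _] := cc i Si; apply/(subringM hR Rc)/(subringX hR)/Ry.
have dvF i j : i \in S -> (j < #|S'|)%N ->
    divides (y i ^+ (e i - (#|S| - 2))) (iter j D (F i)).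
  move=> Si lt_j; have [kc _] := cc i Si.
  rewrite /F (iter_lndZ hD) //; last exact/(subringX hR)/Ry.
  apply/divides_mull/(divides_trans _ (divides_iter_expr hR hD _ _ (Ry i Si)))/dividesX.
  by apply: leq_sub2l; rewrite cardS; lia.
apply: divides_prod => [i j Si Sj ne_ij | i Si]; first exact/rel_coprimeXX/cop.
have [-> | ne_it] := eqVneq i t; last first.
  by apply: (divides_det_wronskian_on (i := i)) => [|j]; [rewrite !inE ne_it | apply: dvF].
apply: divides_det_wronskian_on_sum => [l /setD1P[_ /RF] // | | j lt_j].
  by rewrite -ltnS -cardS.
have -> : \sum_(l in S') F l = - F t.
  by apply/eqP; rewrite -addr_eq0 addrC -(big_setD1 _ St) /= rel.
by rewrite (iter_lndN hR hD _ (RF _ St)); apply/dividesN/dvF.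
Qed.

Lemma abc_wronskian_degree (S : {set I}) y e c t :
    admissible S y e -> nonzero_constants S c -> \sum_(i in S) c i * y i ^+ e i = 0 ->
    t \in S -> (1 < #|S|)%N ->
    \det (wronskian_on (S :\ t) (fun i => c i * y i ^+ e i)) != 0 ->
  (e t * deg D (y t) + 'C(#|S :\ t|, 2)
     <= (#|S| - 2) * \sum_(i in S) deg D (y i))%N.
Proof.
move=> adm cc rel St S_gt1 nzW; have [_ Ry _ _ _] := adm.
have dvW := divides_det_wronskian_prod adm cc rel St S_gt1.
set m := (#|S| - 2)%N in dvW *; set P := \prod_(i in S) _ in dvW.
set S' := S :\ t; set W := \det _ in nzW dvW; pose d i := deg D (y i).
have RF i : i \in S -> R (c i * y i ^+ e i).
  by move=> Si; have [[Rc _] _] := cc i Si; apply/(subringM hR Rc)/(subringX hR)/Ry.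
have RW : R W.
  apply: (subring_det hR) => j r; rewrite wronskianE; apply/(iter_lnd_closed hD)/RF.
  by case/setD1P: (enum_valP r).
have nzP : P != 0 by case: dvW => q Wq; apply: contraNneq nzW => P0; rewrite Wq P0 mul0r.
have RP : R P by apply: (subring_prod hR) => i Si; apply/(subringX hR)/Ry.
have degP : deg D P = (\sum_(i in S) (e i - m) * d i)%N.
  rewrite (deg_prod hR hD hchar) => [|i Si]; last first.
    by split; [apply/(subringX hR)/Ry | move/prodf_neq0: nzP; apply].
  by apply: eq_bigr => i Si; rewrite (degX hR hD hchar _ (Ry i Si)).
have le_PW := deg_le_divides hR hD hchar fcR RP RW nzW dvW.
have le_W : (deg D W + 'C(#|S'|, 2) <= \sum_(i in S') e i * d i)%N.
  have degF i : i \in S' -> deg D (c i * y i ^+ e i) = (e i * d i)%N.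
    case/setD1P=> _ Si; have [kc nz_c] := cc i Si.
    by rewrite (degZ hR hD hchar) ?(degX hR hD hchar _ (Ry i Si)) //; apply/(subringX hR)/Ry.
  by rewrite -(eq_bigr _ degF); apply: deg_det_wronskian_on nzW => i /setD1P[_ /RF].
have sum_t : (\sum_(i in S) e i * d i = e t * d t + \sum_(i in S') e i * d i)%N.
  by rewrite (big_setD1 _ St).
have le_split :
    (\sum_(i in S) e i * d i <= \sum_(i in S) (e i - m) * d i + m * \sum_(i in S) d i)%N.
  rewrite big_distrr -big_split /=; apply: leq_sum => i _.
  by rewrite -mulnDl leq_mul2r addnC -leq_subLR leqnn orbT.
rewrite /d in degP le_W sum_t le_split *; lia.
Qed.

Lemma abc_wronskian_case (S : {set I}) y e c t :
    admissible S y e -> nonzero_constants S c -> \sum_(i in S) c i * y i ^+ e i = 0 ->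
    t \in S -> (1 < #|S|)%N ->
    {in S, forall i, e i * deg D (y i) <= e t * deg D (y t)}%N ->
    \det (wronskian_on (S :\ t) (fun i => c i * y i ^+ e i)) != 0 ->
  {in S, forall i, D (y i) = 0}.
Proof.
move=> adm cc rel St S_gt1 tmax nzW.
have := abc_wronskian_degree adm cc rel St S_gt1 nzW.
have [le_Sn Ry e_gt0 _ wsum] := adm.
have wsumS : (#|S| - 2)%:R * \sum_(i in S | D (y i) != 0) ((e i)%:R : rat)^-1 <= 1.
  apply: le_trans wsum; rewrite ler_wpM2r ?ler_nat ?leq_sub2r //.
  by apply: sumr_ge0 => i _; rewrite invr_ge0.
have : ((#|S| - 2) * \sum_(i in S) deg D (y i) <= e t * deg D (y t))%N.
  apply: (weighted_sum_le _ _ tmax wsumS) => // i Si.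
  by rewrite negbK => /eqP Dy0; apply/eqP; rewrite (deg_eq0 hR hD (Ry i Si)) Dy0.
have [le_S2 | lt2S] := leqP #|S| 2; last first.
  have : (0 < 'C(#|S :\ t|, 2))%N by rewrite bin_gt0 (cardsD1 t S) St in lt2S *.
  by lia.
rewrite (_ : #|S| - 2 = 0)%N ?mul0n; last by lia.
move=> _ /(leq_trans (leq_addr _ _)); rewrite leqn0 => /eqP et0 i Si.
have := tmax i Si; rewrite et0 leqn0 muln_eq0 eqn0Ngt e_gt0 //= => deg0.
by apply/eqP; rewrite -(deg_eq0 hR hD (Ry i Si)).
Qed.

Lemma abc_complement (S T : {set I}) y e c :
    (forall T' : {set I}, (#|T'| < #|S|)%N -> abc_holds T') ->
    admissible S y e -> nonzero_constants S c -> \sum_(i in S) c i * y i ^+ e i = 0 ->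
    T \subset S -> (0 < #|T|)%N -> {in T, forall i, D (y i) = 0} ->
    (1 < #|T|)%N \/ \sum_(i in T) c i * y i ^+ e i = 0 ->
  {in S :\: T, forall i, D (y i) = 0}.
Proof.
move=> IH adm cc rel TS T_gt0 DyT T_gt1_or0; have [le_Sn Ry _ _ _] := adm.
pose C := \sum_(i in T) c i * y i ^+ e i.
have kC : kernel R D C.
  rewrite /C; apply: (subring_sum (kernel_subring hR hD)) => i Ti.
  have Si := subsetP TS i Ti; have [kc _] := cc i Si.
  apply: subringM (kernel_subring hR hD) _ _ kc _; apply: subringX (kernel_subring hR hD) _ _ _.
  by split; [apply: Ry | apply: DyT].
have cardS : (#|T| + #|S :\: T| = #|S|)%N by rewrite -(cardsID T S) (setIidPr TS).
have relST : \sum_(i in S :\: T) c i * y i ^+ e i + C = 0.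
  by rewrite addrC /C -[RHS]rel [RHS](big_setID T) (setIidPr TS).
have ST_S : S :\: T \subset S by apply: subsetDl.
have cc' : nonzero_constants (S :\: T) c by move=> i /(subsetP ST_S)/cc.
have [C0 | nzC] := eqVneq C 0.
  apply: IH (admissible_sub ST_S adm) cc' _; first by rewrite -cardS -add1n leq_add2r.
  by rewrite -[RHS]relST C0 addr0.
have [j0 Tj0] : exists j0, j0 \in T by apply/set0Pn; rewrite -card_gt0.
have ST'j0 : j0 \notin S :\: T by rewrite inE Tj0.
have T_gt1 : (1 < #|T|)%N by case: T_gt1_or0 => // C0; rewrite /C C0 eqxx in nzC.
apply: (abc_holds_add_constant ST'j0 _ (IH _ _) (admissible_sub ST_S adm) cc' kC nzC relST).
  by rewrite (leq_trans _ le_Sn) // -cardS -add1n leq_add2r ltnW.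
by rewrite cardsU1 ST'j0 -cardS /=; lia.
Qed.

Lemma abc_dependent_case (S : {set I}) y e c t :
    (forall T : {set I}, (#|T| < #|S|)%N -> abc_holds T) ->
    admissible S y e -> nonzero_constants S c -> \sum_(i in S) c i * y i ^+ e i = 0 ->
    t \in S -> \det (wronskian_on (S :\ t) (fun i => c i * y i ^+ e i)) = 0 ->
  {in S, forall i, D (y i) = 0}.
Proof.
move=> IH adm cc rel St W0; have [le_Sn Ry _ _ _] := adm.
set S' := S :\ t; have S'S : S' \subset S by apply: subD1set.
have RF i : i \in S -> R (c i * y i ^+ e i).
  by move=> Si; have [[Rc _] _] := cc i Si; apply/(subringM hR Rc)/(subringX hR)/Ry.
have [b [kb [j0 S'j0 nz_b] Eb]] := wronskian_on_dep (fun i Si => RF i (subsetP S'S i Si)) W0.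
pose T := [set i in S' | b i != 0].
have TS' : T \subset S' by apply/subsetP => i; rewrite inE => /andP[].
have TS := subset_trans TS' S'S.
have Tj0 : j0 \in T by rewrite inE S'j0.
have relT : \sum_(i in T) (b i * c i) * y i ^+ e i = 0.
  rewrite -[RHS]Eb [RHS](big_setID T) /= (setIidPr TS') [X in _ = _ + X]big1 ?addr0.
    by apply: eq_bigr => i _; rewrite mulrA.
  by move=> i /setDP[S'i]; rewrite inE S'i negbK => /eqP->; rewrite mul0r.
have DyT : {in T, forall i, D (y i) = 0}.
  apply: IH _ _ _ _ (admissible_sub TS adm) _ relT => [|i Ti].
    by rewrite (leq_ltn_trans (subset_leq_card TS')) // (cardsD1 t S) St.
  have [kc nz_c] := cc i (subsetP TS i Ti); split.
    exact: subringM (kernel_subring hR hD) _ _ (kb i) kc.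
  by rewrite mulf_neq0 //; move: Ti; rewrite inE => /andP[].
have T_gt1_or0 : (1 < #|T|)%N \/ \sum_(i in T) c i * y i ^+ e i = 0.
  have [T_gt1 | T_le1] := ltnP 1 #|T|; [by left | right].
  have TE : T = [set j0] by apply/esym/eqP; rewrite eqEcard sub1set Tj0 cards1.
  move: relT; rewrite TE !big_set1 -mulrA => /eqP.
  by rewrite mulf_eq0 (negbTE nz_b) => /eqP.
have T_gt0 : (0 < #|T|)%N by apply/card_gt0P; exists j0.
have DyST := abc_complement IH adm cc rel TS T_gt0 DyT T_gt1_or0.
by move=> i Si; case: (boolP (i \in T)) => [/DyT | T'i]; last by apply: DyST; rewrite inE T'i.
Qed.

Theorem abc_lnd (S : {set I}) : abc_holds S.
Proof.
have [N] := ubnP #|S|; elim: N S => // N IHN S ltSN y e c adm cc rel.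
have IH (T : {set I}) : (#|T| < #|S|)%N -> abc_holds T.
  by move=> ltTS; apply: IHN (leq_trans ltTS ltSN).
have [le_S1 | lt1S] := leqP #|S| 1.
  move=> i Si; have SE : S = [set i] by apply/esym/eqP; rewrite eqEcard sub1set Si cards1.
  have [_ nz_c] := cc i Si; move: rel; rewrite SE big_set1 => /eqP.
  by rewrite mulf_eq0 (negbTE nz_c) expf_eq0 => /andP[_ /eqP->]; apply: lnd0 hR hD.
have [i0 Si0] : exists i0, i0 \in S by apply/set0Pn; rewrite -card_gt0 ltnW.
pose t := [arg max_(i > i0 in S) (e i * deg D (y i))%N].
have [St tmax] : t \in S /\ {in S, forall i, e i * deg D (y i) <= e t * deg D (y t)}%N.
  by rewrite /t; case: arg_maxnP.
have [W0 | nzW] := eqVneq (\det (wronskian_on (S :\ t) (fun i => c i * y i ^+ e i))) 0.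
  exact: abc_dependent_case IH adm cc rel St W0.
exact: abc_wronskian_case adm cc rel St lt1S tmax nzW.
Qed.

End MasonStothers.

Lemma rel_prime_coprime (B : idomainType) (x y : B) : rel_prime x y -> rel_coprime x y.
Proof. by case=> dvd_xy _ z dx dy; apply: (dvd_xy z).1. Qed.

Lemma fermat_ML_on (B : idomainType) (R : B -> Prop) n (x : 'I_n -> B) (a : 'I_n -> nat) :
    [pchar B] =i pred0 -> is_subring R -> factorially_closed R -> (3 <= n)%N ->
    (forall i, 0 < a i)%N -> \sum_(i < n) x i ^+ a i = 0 ->
    \sum_(i < n) ((a i)%:R : rat)^-1 <= ((n - 2)%:R)^-1 ->
    (forall i j, i != j -> rel_coprime (x i) (x j)) -> (forall i, R (x i)) ->
  forall i, ML_on R (x i).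
Proof.
move=> hchar hR fcR n_ge3 a_gt0 rel wsum cop Rx i; split=> // D hD.
apply: (abc_lnd hR hD hchar fcR (n := n) (S := [set: 'I_n]) (c := fun=> 1)) => //.
- split=> [|j _|j _|j k _ _|]; rewrite ?cardsT ?card_ord //; first exact: cop.
  have n2_gt0 : 0 < ((n - 2)%:R : rat) by rewrite ltr0n subn_gt0.
  rewrite -[X in _ <= X](mulfV (lt0r_neq0 n2_gt0)) ler_pM2l //.
  apply: le_trans wsum.
  under eq_bigl do rewrite in_setT.
  rewrite [X in _ <= X](bigID (fun i => D (x i) != 0)) /= lerDl.
  by rewrite sumr_ge0 // => j _; rewrite invr_ge0.
- by move=> j _; split; [apply: subring1 (kernel_subring hR hD) | apply: oner_neq0].
- by rewrite -[RHS]rel; apply: eq_big => [j|j _]; rewrite ?inE ?mul1r.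
Qed.

Lemma ML_on_subring (B : comNzRingType) (R : B -> Prop) :
  is_subring R -> is_subring (ML_on R).
Proof.
move=> hR; split.
- by split=> [|D hD]; [apply: subring0 hR | apply: lnd0 hR hD].
- by split=> [|D hD]; [apply: subring1 hR | apply: lnd1 hR hD].
- move=> x y [Rx MLx] [Ry MLy]; split=> [|D hD]; first exact: subringB.
  by rewrite (lndB hR hD) // MLx // MLy // subrr.
- move=> x y [Rx MLx] [Ry MLy]; split=> [|D hD]; first exact: subringM.
  by rewrite (lndM hD) // MLx // MLy // !mulr0 addr0.
Qed.

Lemma ML_on_factorially_closed (B : idomainType) (R : B -> Prop) :
    [pchar B] =i pred0 -> is_subring R -> factorially_closed R ->
  factorially_closed (ML_on R).
Proof.
move=> hchar hR fcR x y nz_x nz_y [Rxy MLxy]; have [Rx Ry] := fcR x y nz_x nz_y Rxy.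
have kxy D : is_LND_on R D -> kernel R D x /\ kernel R D y.
  by move=> hD; apply: (kernel_factorially_closed hR hD hchar fcR) => //; split; last exact: MLxy.
by split; split=> // D hD; have [[_ ?] [_ ?]] := kxy D hD.
Qed.

Lemma rel_coprime_mpolyC (B : idomainType) N (x y : B) :
  rel_coprime x y -> rel_coprime (x%:MP : {mpoly B[N]}) y%:MP.
Proof.
move=> cxy z [u Ezu] [v Ezv].
have ex_c m : exists c, z@_m == x * y * c.
  have dx : divides x z@_m by exists u@_m; rewrite Ezu mcoeffCM.
  have dy : divides y z@_m by exists v@_m; rewrite Ezv mcoeffCM.
  by have [c ->] := cxy _ dx dy; exists c.
exists (\sum_(m <- msupp z) xchoose (ex_c m) *: 'X_[m]).
rewrite -rmorphM mul_mpolyC scaler_sumr {1}(mpolyE z); apply: eq_bigr => m _.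
by rewrite scalerA -(eqP (xchooseP (ex_c m))).
Qed.

Lemma pchar_mpoly0 (B : idomainType) N :
  [pchar B] =i pred0 -> [pchar {mpoly B[N]}] =i pred0.
Proof. by move/pcharf0P=> hchar; apply/pcharf0P => m; rewrite -mpolyC_nat mpolyC_eq0. Qed.

Unset Implicit Arguments.

Theorem theorem6p7 (B : idomainType) (hchar : [pchar B] =i pred0)
    (n : nat) (hn : (3 <= n)%N) (x : 'I_n -> B) (a : 'I_n -> nat)
    (ha : forall i, (0 < a i)%N)
    (h1 : \sum_(i < n) x i ^+ a i = 0)
    (h2 : \sum_(i < n) ((a i)%:R : rat)^-1 <= ((n - 2)%:R : rat)^-1)
    (h3 : forall i j : 'I_n, i != j -> rel_prime (x i) (x j)) :
  (forall R : B -> Prop, is_subring R -> factorially_closed R ->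
     (forall i, R (x i)) -> forall i, ML_on R (x i))
  /\ (forall (N : nat) (i : 'I_n), ML ((x i)%:MP : {mpoly B[N]}))
  /\ (forall i, rigid_core (x i)).
Proof.
have cop i j : i != j -> rel_coprime (x i) (x j) by move/h3/rel_prime_coprime.
have ML_x R : is_subring R -> factorially_closed R -> (forall i, R (x i)) ->
    forall i, ML_on R (x i).
  by move=> hR fcR; apply: fermat_ML_on hchar hR fcR hn ha h1 h2 cop.
split; first exact: ML_x.
split.
  move=> N; apply: fermat_ML_on (pchar_mpoly0 N hchar) _ _ hn ha _ h2 _ _ => //.
  - rewrite -[RHS]mpolyC0 -[in RHS]h1 rmorph_sum.
    by apply: eq_bigr => i _; rewrite rmorphXn.
  - by move=> i j /cop/rel_coprime_mpolyC.
move=> i k; suff [_ [_ MLx]] : is_subring (@ML_iter B k) /\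
    factorially_closed (@ML_iter B k) /\ (forall j, @ML_iter B k (x j)) by apply: MLx.
elim: k => [|k [hR [fcR MLx]]]; first by do !split.
split; first exact: ML_on_subring.
by split; [apply: ML_on_factorially_closed | apply: ML_x].
Qed.
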